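(* Let $A$ be an algebra with non-degenerate product, $\Delta$ a regular comultiplication on $A$, and suppose there exists a left integral $\varphi$ on $(A,\Delta)$. Then for any finitely many elements $a_1,\dots,a_n\in A$ there exists $e\in A$ with $a_ie=ea_i=a_i$ for all $i$.
   Context: All algebras are over $\mathbb C$, associative, possibly without identity, with non-degenerate product. $M(A)$ denotes the multiplier algebra and $\iota$ the identity map. A regular comultiplication is a linear map $\Delta:A\to M(A\otimes A)$, not assumed multiplicative, such that: - $\Delta(a)(1\otimes b)$, $(a\otimes1)\Delta(b)$, $\Delta(a)(b\otimes1)$ and $(1\otimes a)\Delta(b)$ all lie in $A\otimes A$; - $(a\otimes1\otimes1)(\Delta\otimes\iota)(\Delta(b)(1\otimes c))=(\iota\otimes\Delta)((a\otimes1)\Delta(b))(1\otimes1\otimes c)$. A left integral is a nonzero linear functional $\varphi$ on $A$ with $(\iota\otimes\varphi)\Delta(a)=\varphi(a)1$ in $M(A)$ for all $a\in A$. Here $(\iota\otimes\varphi)\Delta(a)$ is the multiplier with $((\iota\otimes\varphi)\Delta(a))b=(\iota\otimes\varphi)(\Delta(a)(b\otimes1))$ and $b((\iota\otimes\varphi)\Delta(a))=(\iota\otimes\varphi)((b\otimes1)\Delta(a))$. *)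

From HB Require Import structures.
From mathcomp Require Import all_boot all_order all_algebra.
From mathcomp Require Import reals complex.

Set Implicit Arguments.
Unset Strict Implicit.
Unset Printing Implicit Defensive.

Import Order.TTheory GRing.Theory Num.Theory.
Local Open Scope ring_scope.

(* The ground field C is R[i] for a realType R (any realType is isomorphic to
   the real numbers, so R[i] is the field of complex numbers). *)

Section Defs.
Variable R : realType.
Local Notation C := (R[i]).
Variable V : lmodType C.

Record nualg := NUAlg {
  amul : V -> V -> V;
  amulA : forall x y z, amul x (amul y z) = amul (amul x y) z;
  amulDl : forall x y z, amul (x + y) z = amul x z + amul y z;
  amulDr : forall x y z, amul x (y + z) = amul x y + amul x z;
  amulZl : forall (c : C) x y, amul (c *: x) y = c *: amul x y;
  amulZr : forall (c : C) x y, amul x (c *: y) = c *: amul x y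
}.

Variable m : nualg.
Local Notation "x ** y" := (amul m x y) (at level 40, left associativity).

Definition nondegenerate_product : Prop :=
  (forall a, (forall b, a ** b = 0) -> a = 0) /\
  (forall a, (forall b, b ** a = 0) -> a = 0).

Definition lin (f : V -> C) : Prop :=
  forall (c : C) x y, f (c *: x + y) = c * f x + f y.

(* Tensor products.  An element of A (x) A is represented by a finite list  *)
(* of pairs s = [(x_k, y_k)] standing for sum_k x_k (x) y_k; two lists      *)
(* represent the same tensor iff all functionals f (x) g agree on them      *)
(* (over a field, V (x) W embeds in the bilinear forms on dual(V) x dual(W)).       *)
(* Similarly for A (x) A (x) A with triples.                                *)
Definition t2 := seq (V * V).
Definition t3 := seq (V * V * V).

Definition teq2 (s t : t2) : Prop :=
  forall f g, lin f -> lin g ->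
    \sum_(p <- s) f p.1 * g p.2 = \sum_(p <- t) f p.1 * g p.2.

Definition teq3 (s t : t3) : Prop :=
  forall f g h, lin f -> lin g -> lin h ->
    \sum_(p <- s) f p.1.1 * g p.1.2 * h p.2 =
    \sum_(p <- t) f p.1.1 * g p.1.2 * h p.2.

Definition tscale2 (c : C) (s : t2) : t2 := [seq (c *: p.1, p.2) | p <- s].
Definition tmul2 (s t : t2) : t2 :=
  [seq (p.1 ** q.1, p.2 ** q.2) | p <- s, q <- t].

Definition lmul_l (b : V) (s : t2) : t2 := [seq (b ** p.1, p.2) | p <- s].
Definition rmul_l (b : V) (s : t2) : t2 := [seq (p.1 ** b, p.2) | p <- s].
Definition lmul_r (b : V) (s : t2) : t2 := [seq (p.1, b ** p.2) | p <- s].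
Definition rmul_r (b : V) (s : t2) : t2 := [seq (p.1, p.2 ** b) | p <- s].

(* A linear map Delta : A -> M(A (x) A) is given by its left and right      *)
(* actions on elementary tensors:                                           *)
(*    DL a x y  represents  Delta(a)(x (x) y),                              *)
(*    DR a x y  represents  (x (x) y)Delta(a).                              *)
(* is_comult_map says that these are linear in a, bilinear in (x,y) (hence  *)
(* define linear maps on A (x) A) and satisfy the multiplier identity       *)
(*    (u (x) v)(Delta(a)(x (x) y)) = ((u (x) v)Delta(a))(x (x) y).          *)
Variables DL DR : V -> V -> V -> t2.

Definition is_comult_map : Prop :=
  (forall (c : C) a b x y,
      teq2 (DL (c *: a + b) x y) (tscale2 c (DL a x y) ++ DL b x y) /\
      teq2 (DR (c *: a + b) x y) (tscale2 c (DR a x y) ++ DR b x y)) /\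
  (forall (c : C) a x x' y,
      teq2 (DL a (c *: x + x') y) (tscale2 c (DL a x y) ++ DL a x' y) /\
      teq2 (DR a (c *: x + x') y) (tscale2 c (DR a x y) ++ DR a x' y)) /\
  (forall (c : C) a x y y',
      teq2 (DL a x (c *: y + y')) (tscale2 c (DL a x y) ++ DL a x y') /\
      teq2 (DR a x (c *: y + y')) (tscale2 c (DR a x y) ++ DR a x y')) /\
  (forall a u v x y,
      teq2 (tmul2 [:: (u, v)] (DL a x y)) (tmul2 (DR a u v) [:: (x, y)])).

(* Delta(a) acting on an arbitrary tensor (by linearity) *)
Definition DLs (a : V) (s : t2) : t2 := flatten [seq DL a p.1 p.2 | p <- s].
Definition DRs (a : V) (s : t2) : t2 := flatten [seq DR a p.1 p.2 | p <- s].

(* The multiplier of A (x) A with left action ML (z |-> M z) and right      *)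
(* action MR (z |-> z M) is equal to the element s of A (x) A.             *)
Definition represents2 (ML MR : t2 -> t2) (s : t2) : Prop :=
  forall x y, teq2 (ML [:: (x, y)]) (tmul2 s [:: (x, y)]) /\
              teq2 (MR [:: (x, y)]) (tmul2 [:: (x, y)] s).

(* s = Delta(a)(1 (x) b) *)
Definition rep_D_1b (a b : V) (s : t2) : Prop :=
  represents2 (fun z => DLs a (lmul_r b z)) (fun z => rmul_r b (DRs a z)) s.
(* s = (a (x) 1)Delta(b) *)
Definition rep_a1_D (a b : V) (s : t2) : Prop :=
  represents2 (fun z => lmul_l a (DLs b z)) (fun z => DRs b (rmul_l a z)) s.
(* s = Delta(a)(b (x) 1) *)
Definition rep_D_b1 (a b : V) (s : t2) : Prop :=
  represents2 (fun z => DLs a (lmul_l b z)) (fun z => rmul_l b (DRs a z)) s.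
(* s = (1 (x) a)Delta(b) *)
Definition rep_1a_D (a b : V) (s : t2) : Prop :=
  represents2 (fun z => lmul_r a (DLs b z)) (fun z => DRs b (rmul_r a z)) s.

(* Coassociativity:                                                         *)
(* (a(x)1(x)1)(Delta(x)i)(Delta(b)(1(x)c)) = (i(x)Delta)((a(x)1)Delta(b))(1(x)1(x)c) *)
(* as multipliers of A (x) A (x) A: equal left and right actions on all     *)
(* elementary tensors u (x) v (x) w.                                        *)
Definition coassoc : Prop :=
  forall a b c (s s' : t2), rep_D_1b b c s -> rep_a1_D a b s' ->
  forall u v w,
    teq3
      (flatten [seq [seq (a ** r.1, r.2, pq.2 ** w) | r <- DL pq.1 u v] | pq <- s])
      (flatten [seq [seq (rt.1 ** u, k.1, k.2) | k <- DL rt.2 v (c ** w)] | rt <- s'])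
    /\
    teq3
      (flatten [seq [seq (r.1, r.2, w ** pq.2) | r <- DR pq.1 (u ** a) v] | pq <- s])
      (flatten [seq [seq (u ** rt.1, k.1, k.2 ** c) | k <- DR rt.2 v w] | rt <- s']).

Definition regular_comult : Prop :=
  is_comult_map /\
  (forall a b, exists s, rep_D_1b a b s) /\
  (forall a b, exists s, rep_a1_D a b s) /\
  (forall a b, exists s, rep_D_b1 a b s) /\
  (forall a b, exists s, rep_1a_D a b s) /\
  coassoc.

(* (i (x) phi) applied to a tensor *)
Definition slice_phi (phi : V -> C) (s : t2) : V :=
  \sum_(p <- s) phi p.2 *: p.1.

(* Left integral: a nonzero linear functional phi with (i(x)phi)Delta(a) =   *)
(* phi(a)1 in M(A), i.e. for all b, (i(x)phi)(Delta(a)(b(x)1)) = phi(a) b    *)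
(* and (i(x)phi)((b(x)1)Delta(a)) = phi(a) b.                               *)
Definition left_integral (phi : V -> C) : Prop :=
  lin phi /\ (exists a, phi a != 0) /\
  (forall a b s, rep_D_b1 a b s -> slice_phi phi s = phi a *: b) /\
  (forall a b s, rep_a1_D b a s -> slice_phi phi s = phi a *: b).

End Defs.

(* A vector lies in a subspace as soon as every linear functional vanishing
   on the subspace vanishes on it (a Zorn argument), so it suffices to show that
   a functional [w] vanishing on [aA] vanishes at [a].  Pick [c] with
   [phi c != 0] and apply [w] to [(i (x) phi)((a (x) 1) Delta(c)) = phi(c) a].
   Since [(a (x) 1) Delta(c) (1 (x) y) = (a (x) 1) (Delta(c) (1 (x) y))] has all
   its first legs in [aA], the slice [(w (x) i)((a (x) 1) Delta(c))] is killed by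
   every right multiplication, hence vanishes by non-degeneracy, and so
   [phi(c) w(a) = 0].  Left local units are right local units of the converse
   algebra, and units for single elements combine into a common unit for
   finitely many through [1 - (e + f - e f) = (1 - e) (1 - f)]. *)

From HB Require Import structures.
From mathcomp Require Import all_boot all_order all_algebra.
From mathcomp Require Import reals complex.
From mathcomp Require Import boolp classical_sets.
Import GRing.Theory.

Set Implicit Arguments.
Unset Strict Implicit.
Unset Printing Implicit Defensive.

Local Open Scope ring_scope.
Local Open Scope classical_set_scope.

Section Separation.
Variables (K : fieldType) (V : lmodType K).

Definition lincomb_closed (W : set V) :=
  forall (c : K) x y, W x -> W y -> W (c *: x + y).

Definition avoiding_subspace (W : set V) (v : V) (M : set V) :=
  [/\ W `<=` M, lincomb_closed M & ~ M v].

Lemma maximal_avoiding_subspace W v : W 0 -> lincomb_closed W -> ~ W v ->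
  exists2 A, avoiding_subspace W v A &
    forall B, A `<` B -> ~ avoiding_subspace W v B.
Proof.
move=> W0 clW nWv.
(* [Zorn_bigcup] needs the empty chain, whose union is [set0], to be admissible. *)
pose P M := M = set0 \/ avoiding_subspace W v M.
have [A [[A0|avA] maxA]] : exists A, P A /\ forall B, A `<` B -> ~ P B.
- apply: Zorn_bigcup => F FP totF.
  have avF Y y : F Y -> Y y -> avoiding_subspace W v Y.
    by move=> FY Yy; case: (FP Y FY) => // Y0; move: Yy; rewrite Y0.
  have [U0|/set0P[y [Y FY Yy]]] := eqVneq (\bigcup_(X in F) X) set0; first by left.
  right; split.
  + by move=> w Ww; exists Y => //; case: (avF Y y FY Yy) => + _ _; apply.
  + move=> c x z [X1 FX1 x1] [X2 FX2 z2].
    have [X12|X21] := totF _ _ FX1 FX2.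
    * by exists X2 => //; case: (avF X2 z FX2 z2) => _ + _; apply => //; apply: X12.
    * by exists X1 => //; case: (avF X1 x FX1 x1) => _ + _; apply => //; apply: X21.
  + by move=> [Z FZ Zv]; case: (avF Z v FZ Zv).
- exfalso; apply: (maxA W); last by right; split.
  by rewrite A0; split => [x //|/(_ 0 W0)].
- by exists A => // B AB avB; apply: (maxA B AB); right.
Qed.

Lemma maximal_avoiding_codim1 W v A : W 0 ->
  avoiding_subspace W v A -> (forall B, A `<` B -> ~ avoiding_subspace W v B) ->
  forall x, exists l : K, A (x - l *: v).
Proof.
move=> W0 [WA clA nAv] maxA x; apply: contrapT => nex.
pose B z := exists u l, A u /\ z = u + l *: x.
have Bx : B x by exists 0, 1; rewrite scale1r add0r; split => //; exact: WA.
have AB : A `<=` B by move=> z Az; exists z, 0; rewrite scale0r addr0.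
apply: (maxA B); first by split => // /(_ x Bx) Ax; apply: nex; exists 0; rewrite scale0r subr0.
split => //; first exact: subset_trans AB.
- move=> c z1 z2 [u1 [l1 [A1 ->]]] [u2 [l2 [A2 ->]]].
  exists (c *: u1 + u2), (c * l1 + l2); split; first exact: clA.
  by rewrite scalerDr scalerDl scalerA addrACA.
- move=> [u [l [Au vE]]].
  have [l0|l_neq0] := eqVneq l 0; first by apply: nAv; rewrite vE l0 scale0r addr0.
  apply: nex; exists l^-1.
  have -> : x - l^-1 *: v = (- l^-1) *: u + 0.
    by rewrite vE scalerDr scalerA mulVf // scale1r addr0 scaleNr opprD addrCA subrr addr0.
  by apply: clA => //; exact: WA.
Qed.

Lemma separating_functional W v : W 0 -> lincomb_closed W -> ~ W v ->
  exists f : V -> K, [/\ scalar f, forall w, W w -> f w = 0 & f v = 1].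
Proof.
move=> W0 clW nWv.
have [A avA maxA] := maximal_avoiding_subspace W0 clW nWv.
have codim1 := maximal_avoiding_codim1 W0 avA maxA.
case: avA => WA clA nAv.
have coord_uniq x l1 l2 : A (x - l1 *: v) -> A (x - l2 *: v) -> l1 = l2.
  move=> A1 A2; apply/eqP; rewrite -subr_eq0; apply/negPn/negP => l12.
  apply: nAv; have := clA (l1 - l2)^-1 _ 0 (clA (-1) _ _ A1 A2) (WA 0 W0).
  by rewrite scaleN1r opprB addrA subrK -scalerBl scalerA mulVf // scale1r addr0.
pose f x := projT1 (cid (codim1 x)).
have fP x : A (x - f x *: v) := projT2 (cid (codim1 x)).
exists f; split.
- move=> c x y; apply: (coord_uniq (c *: x + y)); first exact: fP.
  have := clA c _ _ (fP x) (fP y).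
  by rewrite scalerDl -scalerA opprD addrACA -scalerBr.
- move=> w Ww; apply: (coord_uniq w); first exact: fP.
  by rewrite scale0r subr0; apply: WA.
- by apply: (coord_uniq v); [exact: fP | rewrite scale1r subrr; exact: WA].
Qed.

Definition scalar_linear (f : V -> K) (lf : scalar f) : {scalar V} :=
  HB.pack f (GRing.isLinear.Build K V K *%R f lf).

Lemma eq_by_functionals u u' :
  (forall f : V -> K, scalar f -> f u = f u') -> u = u'.
Proof.
move=> fuu'; apply/eqP; rewrite -subr_eq0; apply/eqP; apply: contrapT => nuu'.
have cl0 : lincomb_closed (set1 0) by move=> c x y -> ->; rewrite scaler0 addr0.
have [f [lf _ f1]] := separating_functional (erefl 0) cl0 nuu'.
have : f (u - u') = f u - f u' := linearB (scalar_linear lf) u u'.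
by rewrite f1 (fuu' f lf) subrr => /eqP; rewrite oner_eq0.
Qed.

End Separation.

Section NonUnitalAlgebra.
Variables (R : realType) (V : lmodType R[i]) (m : nualg V).
Local Notation "x ** y" := (amul m x y) (at level 40, left associativity).

Let amul_linear_l b : linear (amul m ^~ b).
Proof. by move=> c x y; rewrite amulDl amulZl. Qed.

Let amul_linear_r a : linear (amul m a).
Proof. by move=> c x y; rewrite amulDr amulZr. Qed.

Definition amull_linear b : {linear V -> V} :=
  HB.pack (amul m ^~ b) (GRing.isLinear.Build _ _ _ _ _ (amul_linear_l b)).

Definition amulr_linear a : {linear V -> V} :=
  HB.pack (amul m a) (GRing.isLinear.Build _ _ _ _ _ (amul_linear_r a)).

Lemma amul0l y : 0 ** y = 0. Proof. exact: linear0 (amull_linear y). Qed.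
Lemma amul0r x : x ** 0 = 0. Proof. exact: linear0 (amulr_linear x). Qed.
Lemma amulBl x y z : (x - y) ** z = x ** z - y ** z.
Proof. exact: (linearB (amull_linear z) x y). Qed.
Lemma amulBr x y z : x ** (y - z) = x ** y - x ** z.
Proof. exact: (linearB (amulr_linear x) y z). Qed.

Lemma amul_sumZl (I : Type) (s : seq I) (c : I -> R[i]) (w : I -> V) b :
  (\sum_(i <- s) c i *: w i) ** b = \sum_(i <- s) c i *: (w i ** b).
Proof.
transitivity (amull_linear b (\sum_(i <- s) c i *: w i)) => //.
by rewrite linear_sum; apply: eq_bigr => i _; rewrite linearZ.
Qed.

Definition nualg_conv : nualg V :=
  NUAlg (fun x y z => esym (amulA m z y x)) (fun x y z => amulDr m z x y)
    (fun x y z => amulDl m y z x) (fun c x y => amulZr m c y x)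
    (fun c x y => amulZl m c y x).

Lemma common_right_unit : (forall a, exists e, a ** e = a) ->
  forall s : seq V, exists e, forall b, b \in s -> b ** e = b.
Proof.
move=> right_unit; elim=> [|b s [e He]]; first by exists 0.
have [f Hf] := right_unit (b - b ** e).
(* [1 - (e + f - e f) = (1 - e) (1 - f)] *)
exists (e + f - e ** f) => t; rewrite inE => /orP [/eqP ->|ts].
  by rewrite amulBr amulDr amulA -addrA -amulBl Hf addrC subrK.
by rewrite amulBr amulDr amulA He // addrK.
Qed.

End NonUnitalAlgebra.

Section Tensors.
Variables (R : realType) (V : lmodType R[i]) (m : nualg V).
Local Notation "x ** y" := (amul m x y) (at level 40, left associativity).

Definition tswap (s : t2 V) : t2 V := [seq (p.2, p.1) | p <- s].

Lemma tswapK : involutive tswap.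
Proof. by elim=> //= -[x y] s ->. Qed.

Lemma scalar_slice (f g : V -> R[i]) (s : t2 V) : lin f ->
  f (slice_phi g s) = \sum_(p <- s) f p.1 * g p.2.
Proof.
move=> lf; transitivity (scalar_linear lf (slice_phi g s)) => //.
by rewrite linear_sum; apply: eq_bigr => p _; rewrite linearZ /= mulrC.
Qed.

Lemma teq2_sliceP (s t : t2 V) :
  teq2 s t <-> forall g, lin g -> slice_phi g s = slice_phi g t.
Proof.
split=> [st g lg | st f g lf lg]; last by rewrite -!scalar_slice // st.
by apply: eq_by_functionals => f lf; rewrite !scalar_slice //; apply: st.
Qed.

Lemma teq2_tswap (s t : t2 V) : teq2 s t -> teq2 (tswap s) (tswap t).
Proof.
move=> st f g lf lg; rewrite !big_map /=.
under eq_bigr do rewrite mulrC; under [RHS]eq_bigr do rewrite mulrC.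
exact: st.
Qed.

Lemma tmul2_seq1r (s : t2 V) x y :
  tmul2 m s [:: (x, y)] = rmul_l m x (rmul_r m y s).
Proof. by elim: s => //= p s <-. Qed.

Lemma tmul2_seq1l (s : t2 V) x y :
  tmul2 m [:: (x, y)] s = lmul_l m x (lmul_r m y s).
Proof. by rewrite /tmul2 /= cats0 /lmul_l /lmul_r -map_comp. Qed.

Lemma rmul_l_tswap x (s : t2 V) : rmul_l m x (tswap s) = tswap (rmul_r m x s).
Proof. by rewrite /rmul_l /rmul_r /tswap -!map_comp. Qed.

Lemma slice_rmul_l (g : V -> R[i]) x (s : t2 V) :
  slice_phi g (rmul_l m x s) = slice_phi g s ** x.
Proof. by rewrite /slice_phi big_map amul_sumZl. Qed.

Hypothesis nondeg_l : forall a, (forall b, a ** b = 0) -> a = 0.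

Lemma eq_by_rmul u u' : (forall x, u ** x = u' ** x) -> u = u'.
Proof.
move=> uu'; apply/eqP; rewrite -subr_eq0; apply/eqP/nondeg_l => x.
by rewrite amulBl uu' subrr.
Qed.

Lemma teq2_rmul_l (s t : t2 V) :
  (forall x, teq2 (rmul_l m x s) (rmul_l m x t)) -> teq2 s t.
Proof.
move=> st; apply/teq2_sliceP => g lg; apply: eq_by_rmul => x.
by rewrite -!slice_rmul_l; apply: (teq2_sliceP _ _).1 (st x) g lg.
Qed.

Lemma teq2_rmul_r (s t : t2 V) :
  (forall y, teq2 (rmul_r m y s) (rmul_r m y t)) -> teq2 s t.
Proof.
move=> st; rewrite -[s]tswapK -[t]tswapK; apply/teq2_tswap/teq2_rmul_l => x.
by rewrite !rmul_l_tswap; apply/teq2_tswap.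
Qed.

Lemma teq2_tmul2 (s t : t2 V) :
  (forall x y, teq2 (tmul2 m s [:: (x, y)]) (tmul2 m t [:: (x, y)])) -> teq2 s t.
Proof.
move=> st; apply: teq2_rmul_r => y; apply: teq2_rmul_l => x.
by rewrite -!tmul2_seq1r.
Qed.

End Tensors.

Section RightLocalUnits.
Variables (R : realType) (V : lmodType R[i]) (m : nualg V).
Variables (DL DR : V -> V -> V -> t2 V) (phi : V -> R[i]).
Local Notation "x ** y" := (amul m x y) (at level 40, left associativity).

Lemma teq2_lmul_l a (s t : t2 V) :
  teq2 s t -> teq2 (lmul_l m a s) (lmul_l m a t).
Proof.
move=> st f g lf lg; rewrite !big_map; apply: (st (fun z => f (a ** z))) => // c x y /=.
by rewrite amulDr amulZr lf.
Qed.

Hypothesis nondeg_l : forall a, (forall b, a ** b = 0) -> a = 0.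

(* [(a (x) 1) Delta(c) (1 (x) y)], computed by associating either way. *)
Lemma a1_D_mul_1b a c y (s s' : t2 V) :
  rep_a1_D m DL DR a c s -> rep_D_1b m DL DR c y s' ->
  teq2 (rmul_r m y s) (lmul_l m a s').
Proof.
move=> hs hs'; apply: (teq2_tmul2 nondeg_l) => x z f g lf lg.
have h1 := proj1 (hs x (y ** z)) f g lf lg.
have h2 := teq2_lmul_l a (proj1 (hs' x z)) lf lg.
have -> : tmul2 m (rmul_r m y s) [:: (x, z)] = tmul2 m s [:: (x, y ** z)].
  rewrite !tmul2_seq1r /rmul_r -map_comp; congr (rmul_l _ _ _).
  by apply: eq_map => p /=; rewrite amulA.
have -> : tmul2 m (lmul_l m a s') [:: (x, z)] = lmul_l m a (tmul2 m s' [:: (x, z)]).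
  rewrite !tmul2_seq1r /lmul_l /rmul_l /rmul_r -!map_comp.
  by apply: eq_map => p /=; rewrite amulA.
by rewrite -h1; exact: h2.
Qed.

Hypothesis D_1b_ex : forall a b, exists s, rep_D_1b m DL DR a b s.
Hypothesis a1_D_ex : forall a b, exists s, rep_a1_D m DL DR a b s.
Hypothesis phi_lin : lin phi.
Hypothesis phi_neq0 : exists c, phi c != 0.
Hypothesis phi_left_inv :
  forall a b s, rep_a1_D m DL DR b a s -> slice_phi phi s = phi a *: b.

Lemma slice_tswap_a1_D_eq0 a c (w : V -> R[i]) (s : t2 V) :
  lin w -> (forall x, w (a ** x) = 0) -> rep_a1_D m DL DR a c s ->
  slice_phi w (tswap s) = 0.
Proof.
move=> lw wa0 hs; apply: (eq_by_rmul nondeg_l) => y; rewrite amul0l.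
have [s' hs'] := D_1b_ex c y.
rewrite -slice_rmul_l rmul_l_tswap.
rewrite ((teq2_sliceP _ _).1 (teq2_tswap (a1_D_mul_1b hs hs')) w lw).
by rewrite /slice_phi !big_map big1 // => q _; rewrite /= wa0 scale0r.
Qed.

Lemma right_ideal_annihilator_vanishes a (w : V -> R[i]) :
  lin w -> (forall x, w (a ** x) = 0) -> w a = 0.
Proof.
move=> lw wa0; have [c phic] := phi_neq0; have [s hs] := a1_D_ex a c.
have wZ : w (phi c *: a) = phi c * w a := scalarZ (scalar_linear lw) _ _.
have phi0 : phi 0 = 0 := linear0 (scalar_linear phi_lin).
have : phi c * w a = phi (slice_phi w (tswap s)).
  rewrite -wZ -(phi_left_inv hs) !scalar_slice // big_map.
  by apply: eq_bigr => p _; rewrite mulrC.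
rewrite (slice_tswap_a1_D_eq0 lw wa0 hs) phi0 => /eqP.
by rewrite mulf_eq0 (negbTE phic) => /eqP.
Qed.

Lemma right_local_unit a : exists e, a ** e = a.
Proof.
apply: contrapT => no_unit.
pose aV := [set y | exists x, a ** x = y].
have aV0 : aV 0 by exists 0; exact: amul0r.
have aV_closed : lincomb_closed aV.
  by move=> c _ _ [x <-] [z <-]; exists (c *: x + z); rewrite amulDr amulZr.
have [|w [lw wA wa]] := separating_functional (v := a) aV0 aV_closed.
  by move=> [e ae]; apply: no_unit; exists e.
have := right_ideal_annihilator_vanishes lw (fun x => wA _ (ex_intro _ x erefl)).
by rewrite wa => /eqP; rewrite oner_eq0.
Qed.

End RightLocalUnits.

(* Left-hand statements are right-hand ones for the converse algebra, where
   [DL] and [DR] exchange roles. *)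
Section Converse.
Variables (R : realType) (V : lmodType R[i]) (m : nualg V).
Variables DL DR : V -> V -> V -> t2 V.

Lemma represents2_conv (ML MR : t2 V -> t2 V) (s : t2 V) :
  represents2 (nualg_conv m) ML MR s <-> represents2 m MR ML s.
Proof.
have E1 x y : tmul2 (nualg_conv m) s [:: (x, y)] = tmul2 m [:: (x, y)] s.
  by rewrite tmul2_seq1r tmul2_seq1l.
have E2 x y : tmul2 (nualg_conv m) [:: (x, y)] s = tmul2 m s [:: (x, y)].
  by rewrite tmul2_seq1r tmul2_seq1l.
split=> H x y; have [h1 h2] := H x y.
- by split; [move: h2 | move: h1]; rewrite ?E1 ?E2.
- by split; rewrite ?E1 ?E2.
Qed.

Lemma rep_D_1b_conv a b s :
  rep_D_1b (nualg_conv m) DR DL a b s <-> rep_1a_D m DL DR b a s.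
Proof. exact: represents2_conv. Qed.

Lemma rep_a1_D_conv a b s :
  rep_a1_D (nualg_conv m) DR DL a b s <-> rep_D_b1 m DL DR b a s.
Proof. exact: represents2_conv. Qed.

Lemma common_unit : (forall a, exists e, amul m a e = a) ->
    (forall a, exists e, amul m e a = a) ->
  forall s : seq V, exists e, forall b, b \in s -> amul m b e = b /\ amul m e b = b.
Proof.
move=> right_unit left_unit s.
have [e He] := common_right_unit (m := nualg_conv m) left_unit s.
have [f Hf] := common_right_unit right_unit s.
have He' b : b \in s -> amul m e b = b := He b.
exists (f + e - amul m f e) => b bs; split.
- by rewrite amulBr amulDr amulA Hf // addrK.
- by rewrite amulBl amulDl -amulA He' // addrAC subrr add0r.
Qed.

End Converse.

Lemma left_integral_local_units (R : realType) (V : lmodType R[i]) (m : nualg V)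
    (DL DR : V -> V -> V -> t2 V) (phi : V -> R[i]) :
  nondegenerate_product m -> regular_comult m DL DR -> left_integral m DL DR phi ->
  (forall a, exists e, amul m a e = a) /\ (forall a, exists e, amul m e a = a).
Proof.
move=> [nd_l nd_r] [_ [D_1b [a1_D [D_b1 [D_1a _]]]]] [lphi [phi_neq0 [int_b1 int_a1]]].
split=> a; first exact: (right_local_unit nd_l D_1b a1_D lphi phi_neq0 int_a1).
apply: (right_local_unit (m := nualg_conv m) (DL := DR) (DR := DL) nd_r) => //.
- by move=> a' b; have [s /rep_D_1b_conv hs] := D_1a b a'; exists s.
- by move=> a' b; have [s /rep_a1_D_conv hs] := D_b1 b a'; exists s.
- by move=> a' b s /rep_a1_D_conv; apply: int_b1.
Qed.

Theorem proposition1p6 (R : realType) (V : lmodType R[i]) (m : nualg V)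
  (DL DR : V -> V -> V -> t2 V) (phi : V -> R[i]) :
  nondegenerate_product m ->
  regular_comult m DL DR ->
  left_integral m DL DR phi ->
  forall (n : nat) (a : 'I_n -> V),
    exists e : V, forall i : 'I_n, amul m (a i) e = a i /\ amul m e (a i) = a i.
Proof.
move=> nd reg integ n a.
have [right_unit left_unit] := left_integral_local_units nd reg integ.
have [e He] := common_unit right_unit left_unit (codom a).
by exists e => i; apply/He/codom_f.
Qed.
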